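(* Let $g:[0,1)\to\mathbb{R}$ be the function defined in the context. Then $g$ attains its maximum on $[0,1)$, i.e. there exists $a^*\in[0,1)$ with $g(a^* )=\sup_{a\in[0,1)}g(a)$.
   Context: Fix $P>0$, $y_H>y_L\ge 0$, a real number $u$ and $\gamma\in(0,1]$. Let $C:[0,1)\to\mathbb{R}$ satisfy $C(0)=0$, $C$ increasing, strictly convex, twice differentiable, $C(a)\to\infty$ as $a\to1$. Let $\eta:[0,\infty)\to\mathbb{R}$ be strictly convex, increasing, twice differentiable with $\eta(0)=0$, and let $\beta\ge0$ satisfy $\gamma\eta'(\beta)=1$ (assumed to exist). For $a\in[0,1)$ define $w_L^*(a)=\max\{0,u-aC'(a)+C(a)\}$, $w_H^*(a)=w_L^*(a)+C'(a)$, $b_i^*(a)=\min\{\beta,w_i^*(a)\}$ for $i\in\{H,L\}$, and $g(a)=a\,(Py_H-w_H^*(a)+b_H^*(a)-\gamma\eta(b_H^*(a)))+(1-a)\,(Py_L-w_L^*(a)+b_L^*(a)-\gamma\eta(b_L^*(a)))$. (These are the optimal wages and thefts inducing effort $a$ in the one-shot wage-theft principal–agent problem, and $g(a)$ is the employer's resulting profit.) *)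

From Stdlib Require Import Reals Lra.
Open Scope R_scope.

(* The effort domain [0,1) and the theft domain [0,oo). *)
Definition dom01 (a : R) : Prop := 0 <= a < 1.
Definition domNN (b : R) : Prop := 0 <= b.

(* f' is the derivative of f relative to the set D at every point of D
   (one-sided at a boundary point such as 0): the difference quotient
   (f x - f a)/(x - a), for x in D, x <> a, tends to f' a as x -> a. *)
Definition deriv_on (D : R -> Prop) (f f' : R -> R) : Prop :=
  forall a, D a ->
    limit1_in (fun x => (f x - f a) / (x - a)) (fun x => D x /\ x <> a) (f' a) a.

Definition strictly_increasing_on (D : R -> Prop) (f : R -> R) : Prop :=
  forall x y, D x -> D y -> x < y -> f x < f y.

Definition strictly_convex_on (D : R -> Prop) (f : R -> R) : Prop :=
  forall x y t, D x -> D y -> x <> y -> 0 < t < 1 ->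
    f (t * x + (1 - t) * y) < t * f x + (1 - t) * f y.

Definition tends_to_infty_at_1 (C : R -> R) : Prop :=
  forall M, exists d, 0 < d /\ forall a, 1 - d < a < 1 -> M < C a.

(* Optimal wages, thefts and the employer's profit g(a); dC stands for C'. *)
Definition wL (u : R) (C dC : R -> R) (a : R) : R :=
  Rmax 0 (u - a * dC a + C a).
Definition wH (u : R) (C dC : R -> R) (a : R) : R := wL u C dC a + dC a.
Definition bL (beta u : R) (C dC : R -> R) (a : R) : R := Rmin beta (wL u C dC a).
Definition bH (beta u : R) (C dC : R -> R) (a : R) : R := Rmin beta (wH u C dC a).

Definition g (P yH yL u gamma beta : R) (C dC eta : R -> R) (a : R) : R :=
  a * (P * yH - wH u C dC a + bH beta u C dC a - gamma * eta (bH beta u C dC a))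
  + (1 - a) * (P * yL - wL u C dC a + bL beta u C dC a
               - gamma * eta (bL beta u C dC a)).

(** The profit [g] is continuous on [[0,1)]: [C], [C'] and [eta] are continuous
    because they are differentiable, and [g] is built from them by sums,
    products, [Rmax] and [Rmin].  Thefts are at most [beta] and [eta >= 0], and
    the expected wage [a wH + (1-a) wL = wL + a C'(a)] is at least [u + C(a)],
    so [g(a) <= P yH + beta - u - C(a)].  As [C(a) -> +oo] when [a -> 1], [g]
    falls below [g(0)] on some interval [(c,1)], and the maximum of [g] on the
    compact interval [[0,c]] is the maximum on [[0,1)]. *)
From Stdlib Require Import Reals Lra.
Open Scope R_scope.

Definition continuous_within (D : R -> Prop) (f : R -> R) : Prop :=
  forall a, D a -> limit1_in f D (f a) a.

Lemma limit1_const (c : R) (D : R -> Prop) (x0 : R) :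
  limit1_in (fun _ => c) D c x0.
Proof. exact (limit_free (fun _ => c) D 0 x0). Qed.

Lemma limit1_ge (f : R -> R) (D : R -> Prop) (l x0 m : R) :
  limit1_in f D l x0 ->
  (forall del, 0 < del -> exists x, D x /\ R_dist x x0 < del /\ m <= f x) ->
  m <= l.
Proof.
  intros Hlim Hnear.
  destruct (Rle_or_lt m l) as [|Hlt]; [assumption|].
  destruct (Hlim (m - l)) as [del [Hdel Hclose]]; [lra|].
  destruct (Hnear del Hdel) as [x [Dx [Hx Hm]]].
  specialize (Hclose x (conj Dx Hx)); simpl in Hclose.
  unfold R_dist in Hclose; apply Rabs_def2 in Hclose; lra.
Qed.

Lemma limit1_lipschitz2 (F : R -> R -> R) (f1 f2 : R -> R) (D : R -> Prop)
    (l1 l2 x0 : R) :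
  (forall a b c d, Rabs (F a b - F c d) <= Rabs (a - c) + Rabs (b - d)) ->
  limit1_in f1 D l1 x0 -> limit1_in f2 D l2 x0 ->
  limit1_in (fun x => F (f1 x) (f2 x)) D (F l1 l2) x0.
Proof.
  intros HF H1 H2 eps Heps.
  destruct (H1 (eps / 2)) as [d1 [Hd1 H1']]; [lra|].
  destruct (H2 (eps / 2)) as [d2 [Hd2 H2']]; [lra|].
  exists (Rmin d1 d2); split; [apply Rmin_glb_lt; assumption|].
  intros x [Dx Hx]; simpl in *; unfold R_dist in *.
  assert (Hx1 : Rabs (x - x0) < d1) by (generalize (Rmin_l d1 d2); lra).
  assert (Hx2 : Rabs (x - x0) < d2) by (generalize (Rmin_r d1 d2); lra).
  specialize (H1' x (conj Dx Hx1)); specialize (H2' x (conj Dx Hx2)).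
  specialize (HF (f1 x) (f2 x) l1 l2); simpl in *; unfold R_dist in *; lra.
Qed.

Lemma limit1_Rmax (f1 f2 : R -> R) (D : R -> Prop) (l1 l2 x0 : R) :
  limit1_in f1 D l1 x0 -> limit1_in f2 D l2 x0 ->
  limit1_in (fun x => Rmax (f1 x) (f2 x)) D (Rmax l1 l2) x0.
Proof.
  apply limit1_lipschitz2; intros.
  unfold Rmax; repeat destruct Rle_dec; unfold Rabs; repeat destruct Rcase_abs; lra.
Qed.

Lemma limit1_Rmin (f1 f2 : R -> R) (D : R -> Prop) (l1 l2 x0 : R) :
  limit1_in f1 D l1 x0 -> limit1_in f2 D l2 x0 ->
  limit1_in (fun x => Rmin (f1 x) (f2 x)) D (Rmin l1 l2) x0.
Proof.
  apply limit1_lipschitz2; intros.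
  unfold Rmin; repeat destruct Rle_dec; unfold Rabs; repeat destruct Rcase_abs; lra.
Qed.

Lemma continuous_within_of_deriv (D : R -> Prop) (f f' : R -> R) :
  deriv_on D f f' -> continuous_within D f.
Proof.
  intros Hf a Da.
  set (Da' := fun x => D x /\ x <> a).
  assert (Hpunct : limit1_in f Da' (f a) a).
  { (* f x = (f x - f a) / (x - a) * (x - a) + f a away from a *)
    assert (H := limit_plus _ _ _ _ _ _
                   (limit_mul _ _ _ _ _ _ (Hf a Da)
                      (limit_minus _ _ _ _ _ _ (lim_x Da' a) (limit1_const a Da' a)))
                   (limit1_const (f a) Da' a)).
    replace (f' a * (a - a) + f a) with (f a) in H by ring.
    refine (limit1_ext _ _ _ _ _ _ H); intros x [_ Hxa]; field; lra. }
  intros eps Heps.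
  destruct (Hpunct eps Heps) as [del [Hdel Hclose]].
  exists del; split; [assumption|].
  intros x [Dx Hx]; destruct (Req_dec x a) as [->|Hxa].
  - simpl; unfold R_dist; rewrite Rminus_diag, Rabs_R0; lra.
  - exact (Hclose x (conj (conj Dx Hxa) Hx)).
Qed.

Lemma deriv_nonneg_of_increasing (D : R -> Prop) (f f' : R -> R) (a : R) :
  deriv_on D f f' -> strictly_increasing_on D f -> D a ->
  (forall del, 0 < del -> exists x, D x /\ a < x < a + del) ->
  0 <= f' a.
Proof.
  intros Hf Hinc Da Hright.
  apply (limit1_ge _ _ _ _ _ (Hf a Da)); intros del Hdel.
  destruct (Hright del Hdel) as [x [Dx Hx]].
  exists x; split; [split; [assumption | lra]|split].
  - unfold R_dist; rewrite Rabs_right; lra.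
  - left; apply Rdiv_lt_0_compat; [apply Rlt_0_minus, Hinc; auto; lra | lra].
Qed.

Lemma dom01_right_neighbour (a : R) :
  dom01 a -> forall del, 0 < del -> exists x, dom01 x /\ a < x < a + del.
Proof.
  unfold dom01; intros Ha del Hdel.
  exists (a + Rmin (del / 2) ((1 - a) / 2)).
  generalize (Rmin_l (del / 2) ((1 - a) / 2)) (Rmin_r (del / 2) ((1 - a) / 2)).
  assert (0 < Rmin (del / 2) ((1 - a) / 2)) by (apply Rmin_glb_lt; lra).
  lra.
Qed.

Lemma max_attained_on_segment (f : R -> R) (a b : R) :
  a <= b -> continuous_within (fun x => a <= x <= b) f ->
  exists m, a <= m <= b /\ forall x, a <= x <= b -> f x <= f m.
Proof.
  intros Hab Hf.
  (* f is extended to R by clamping its argument to [a,b] *)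
  set (clamp := fun x => Rmax a (Rmin b x)).
  assert (Hclamp_in : forall x, a <= clamp x <= b).
  { intros x; unfold clamp, Rmax, Rmin; repeat destruct Rle_dec; lra. }
  assert (Hclamp_id : forall x, a <= x <= b -> clamp x = x).
  { intros x Hx; unfold clamp, Rmax, Rmin; repeat destruct Rle_dec; lra. }
  assert (Hcont : forall x, continuity_pt (fun y => f (clamp y)) x).
  { intros x.
    assert (Hclamp : limit1_in clamp (fun _ => True) (clamp x) x).
    { exact (limit1_Rmax _ _ _ _ _ _ (limit1_const a _ x)
               (limit1_Rmin _ _ _ _ _ _ (limit1_const b _ x) (lim_x _ x))). }
    apply (limit1_imp _ _ _ _ _ (fun y _ => conj I (Hclamp_in y))).
    exact (limit_comp _ _ _ _ _ _ _ Hclamp (Hf _ (Hclamp_in x))). }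
  destruct (continuity_ab_maj _ a b Hab (fun x _ => Hcont x)) as [m [Hm Hmab]].
  exists m; split; [assumption|].
  intros x Hx; specialize (Hm x Hx); cbv beta in Hm.
  rewrite !Hclamp_id in Hm; assumption.
Qed.

Lemma max_attained_dom01 (f h : R -> R) (K : R) :
  continuous_within dom01 f -> tends_to_infty_at_1 h ->
  (forall a, dom01 a -> f a <= K - h a) ->
  exists m, dom01 m /\ forall a, dom01 a -> f a <= f m.
Proof.
  unfold dom01; intros Hf Hh Hbound.
  destruct (Hh (K - f 0)) as [d [Hd Hnear1]].
  set (c := Rmax 0 (1 - d / 2)).
  assert (Hc : 0 <= c /\ 1 - d / 2 <= c < 1).
  { unfold c, Rmax; destruct Rle_dec; lra. }
  destruct (max_attained_on_segment f 0 c) as [m [Hm Hmax]]; [lra| |].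
  { intros a Ha; apply (limit1_imp _ dom01); [unfold dom01; intros x Hx; lra|].
    apply Hf; lra. }
  exists m; split; [lra|].
  intros a Ha; destruct (Rle_or_lt a c) as [Hac|Hca]; [apply Hmax; lra|].
  generalize (Hbound a Ha) (Hnear1 a ltac:(lra)) (Hmax 0 ltac:(lra)); lra.
Qed.

Section Profit.

Variables (P yH yL u gamma beta : R) (C dC eta : R -> R).
Hypotheses (HP : 0 < P) (HyHL : yL < yH) (Hgamma : 0 < gamma) (Hbeta : 0 <= beta).
Hypothesis HdC_nonneg : forall a, dom01 a -> 0 <= dC a.
Hypothesis Heta_nonneg : forall b, domNN b -> 0 <= eta b.

Lemma bL_nonneg (a : R) : 0 <= bL beta u C dC a.
Proof. apply Rmin_glb; [assumption | apply Rmax_l]. Qed.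

Lemma bH_nonneg (a : R) : dom01 a -> 0 <= bH beta u C dC a.
Proof.
  intros Ha; apply Rmin_glb; [assumption|].
  generalize (Rmax_l 0 (u - a * dC a + C a)) (HdC_nonneg a Ha).
  unfold wH, wL; lra.
Qed.

Lemma g_le_sub_C (a : R) :
  dom01 a -> g P yH yL u gamma beta C dC eta a <= P * yH + beta - u - C a.
Proof.
  intros Ha.
  assert (HwL : u - a * dC a + C a <= wL u C dC a) by apply Rmax_r.
  assert (HbH : bH beta u C dC a <= beta) by apply Rmin_l.
  assert (HbL : bL beta u C dC a <= beta) by apply Rmin_l.
  assert (HeH : 0 <= gamma * eta (bH beta u C dC a))
    by (apply Rmult_le_pos; [lra | apply Heta_nonneg, bH_nonneg, Ha]).
  assert (HeL : 0 <= gamma * eta (bL beta u C dC a))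
    by (apply Rmult_le_pos; [lra | apply Heta_nonneg, bL_nonneg]).
  assert (Hy : P * yL <= P * yH) by (apply Rmult_le_compat_l; lra).
  unfold g, wH in *; unfold dom01 in Ha.
  set (X := P * yH - (wL u C dC a + dC a) + bH beta u C dC a
            - gamma * eta (bH beta u C dC a)).
  set (Y := P * yL - wL u C dC a + bL beta u C dC a
            - gamma * eta (bL beta u C dC a)).
  assert (HX : a * X <= a * (P * yH - (wL u C dC a + dC a) + beta))
    by (apply Rmult_le_compat_l; unfold X; lra).
  assert (HY : (1 - a) * Y <= (1 - a) * (P * yH - wL u C dC a + beta))
    by (apply Rmult_le_compat_l; unfold Y; lra).
  lra.
Qed.

Lemma g_continuous :
  continuous_within dom01 C -> continuous_within dom01 dC ->
  continuous_within domNN eta ->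
  continuous_within dom01 (g P yH yL u gamma beta C dC eta).
Proof.
  intros HC HdC Heta a Ha.
  pose (cst c := limit1_const c dom01 a).
  assert (HwL : limit1_in (wL u C dC) dom01 (wL u C dC a) a).
  { exact (limit1_Rmax _ _ _ _ _ _ (cst 0)
             (limit_plus _ _ _ _ _ _ (limit_minus _ _ _ _ _ _ (cst u)
                (limit_mul _ _ _ _ _ _ (lim_x _ a) (HdC a Ha))) (HC a Ha))). }
  assert (HwH : limit1_in (wH u C dC) dom01 (wH u C dC a) a)
    by exact (limit_plus _ _ _ _ _ _ HwL (HdC a Ha)).
  assert (HbL : limit1_in (bL beta u C dC) dom01 (bL beta u C dC a) a)
    by exact (limit1_Rmin _ _ _ _ _ _ (cst beta) HwL).
  assert (HbH : limit1_in (bH beta u C dC) dom01 (bH beta u C dC a) a)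
    by exact (limit1_Rmin _ _ _ _ _ _ (cst beta) HwH).
  assert (HeL : limit1_in (fun x => eta (bL beta u C dC x)) dom01
                  (eta (bL beta u C dC a)) a).
  { apply (limit1_imp _ _ _ _ _ (fun x Hx => conj Hx (bL_nonneg x))).
    exact (limit_comp _ _ _ _ _ _ _ HbL (Heta _ (bL_nonneg a))). }
  assert (HeH : limit1_in (fun x => eta (bH beta u C dC x)) dom01
                  (eta (bH beta u C dC a)) a).
  { apply (limit1_imp _ _ _ _ _ (fun x Hx => conj Hx (bH_nonneg x Hx))).
    exact (limit_comp _ _ _ _ _ _ _ HbH (Heta _ (bH_nonneg a Ha))). }
  exact (limit_plus _ _ _ _ _ _
    (limit_mul _ _ _ _ _ _ (lim_x _ a)
       (limit_minus _ _ _ _ _ _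
          (limit_plus _ _ _ _ _ _ (limit_minus _ _ _ _ _ _ (cst (P * yH)) HwH) HbH)
          (limit_mul _ _ _ _ _ _ (cst gamma) HeH)))
    (limit_mul _ _ _ _ _ _ (limit_minus _ _ _ _ _ _ (cst 1) (lim_x _ a))
       (limit_minus _ _ _ _ _ _
          (limit_plus _ _ _ _ _ _ (limit_minus _ _ _ _ _ _ (cst (P * yL)) HwL) HbL)
          (limit_mul _ _ _ _ _ _ (cst gamma) HeL)))).
Qed.

End Profit.

Theorem proposition3
  (P yH yL u gamma beta : R) (C dC ddC eta deta ddeta : R -> R)
  (HP : 0 < P) (HyL : 0 <= yL) (HyHL : yL < yH)
  (Hgamma : 0 < gamma <= 1)
  (* C : [0,1) -> R *)
  (HC0 : C 0 = 0)
  (HCinc : strictly_increasing_on dom01 C)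
  (HCconv : strictly_convex_on dom01 C)
  (HdC : deriv_on dom01 C dC)
  (HddC : deriv_on dom01 dC ddC)
  (HCinf : tends_to_infty_at_1 C)
  (* eta : [0,oo) -> R *)
  (Heta0 : eta 0 = 0)
  (Hetainc : strictly_increasing_on domNN eta)
  (Hetaconv : strictly_convex_on domNN eta)
  (Hdeta : deriv_on domNN eta deta)
  (Hddeta : deriv_on domNN deta ddeta)
  (Hbeta : 0 <= beta) (Hbeta1 : gamma * deta beta = 1) :
  exists astar, dom01 astar /\
    forall a, dom01 a -> g P yH yL u gamma beta C dC eta a
                         <= g P yH yL u gamma beta C dC eta astar.
Proof.
  assert (HdC_nonneg : forall a, dom01 a -> 0 <= dC a).
  { intros a Ha; apply (deriv_nonneg_of_increasing dom01 C dC a HdC HCinc Ha).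
    exact (dom01_right_neighbour a Ha). }
  assert (Heta_nonneg : forall b, domNN b -> 0 <= eta b).
  { intros b Hb; destruct (Req_dec b 0) as [->|Hb0]; [lra|].
    rewrite <- Heta0; left; apply Hetainc; unfold domNN in *; lra. }
  apply (max_attained_dom01 _ C (P * yH + beta - u)); [| exact HCinf |].
  - exact (g_continuous P yH yL u gamma beta C dC eta Hbeta HdC_nonneg
             (continuous_within_of_deriv _ _ _ HdC)
             (continuous_within_of_deriv _ _ _ HddC)
             (continuous_within_of_deriv _ _ _ Hdeta)).
  - exact (g_le_sub_C P yH yL u gamma beta C dC eta HP HyHL ltac:(lra) Hbeta
             HdC_nonneg Heta_nonneg).
Qed.
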